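(* Let $\mathcal{A}$ be a graded algebra and $(C,d)$ a differential graded $\mathcal{A}$-module (an $\mathcal{A}$-differential space, $\mathcal{A}$ acting compatibly with $d$). Suppose $H_1\colon C\to C$ is an $\mathcal{A}$-equivariant homotopy operator between the identity and some $\mathcal{A}$-equivariant projection $\Pi_1\colon C\to C$ onto a differential subspace $C'\subset C$, i.e. $[d,H_1]=I-\Pi_1$, and suppose that a cochain map $\Pi\colon C\to C$ is another $\mathcal{A}$-equivariant projection onto $C'$. Then $H=(I-\Pi_1-\Pi)H_1(I-\Pi_1-\Pi)$ is an $\mathcal{A}$-equivariant homotopy between $I$ and $\Pi$, i.e. $[d,H]=I-\Pi$.
   Context: $[d,H]=dH+Hd$ for an odd operator $H$ (graded commutator). $\mathcal{A}$ carries the trivial differential. *)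

From HB Require Import structures.
From mathcomp Require Import all_boot all_order all_algebra.
Set Implicit Arguments. Unset Strict Implicit. Unset Printing Implicit Defensive.
Import GRing.Theory.
Local Open Scope ring_scope.

Section GradedDefs.
Variable R : fieldType.

Definition gsign (m : int) : R := (-1) ^+ absz m.

Definition subspace (V : lmodType R) (S : pred V) : Prop :=
  0 \in S /\ (forall (k : R) u v, u \in S -> v \in S -> k *: u + v \in S).

(* V = (+)_n G n  (internal direct sum of subspaces indexed by int) *)
Definition grading (V : lmodType R) (G : int -> pred V) : Prop :=
  [/\ forall n, subspace (G n),
      forall v, exists (s : seq int) (f : int -> V),
        (forall n, f n \in G n) /\ v = \sum_(n <- s) f n &
      forall (s : seq int) (f : int -> V), uniq s -> (forall n, f n \in G n) ->
        \sum_(n <- s) f n = 0 -> forall n, n \in s -> f n = 0].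

Definition linmap (V : lmodType R) (f : V -> V) : Prop :=
  forall (k : R) u v, f (k *: u + v) = k *: f u + f v.

Definition graded_algebra (A : algType R) (GA : int -> pred A) : Prop :=
  [/\ grading GA, 1 \in GA 0 &
      forall m n a b, a \in GA m -> b \in GA n -> a * b \in GA (m + n)].

(* differential graded A-module (A with trivial differential); d has degree +1 *)
Record dg_module (A : algType R) (GA : int -> pred A) (C : lmodType R)
    (GC : int -> pred C) (act : A -> C -> C) (d : C -> C) : Prop := DGModule {
  dgm_grading : grading GC;
  dgm_d_lin : linmap d;
  dgm_d_deg : forall n c, c \in GC n -> d c \in GC (n + 1);
  dgm_dd : forall c, d (d c) = 0;
  dgm_act_lin : forall a, linmap (act a);
  dgm_act_linl : forall (k : R) a b c, act (k *: a + b) c = k *: act a c + act b c;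
  dgm_act1 : forall c, act 1 c = c;
  dgm_actM : forall a b c, act (a * b) c = act a (act b c);
  dgm_act_deg : forall m n a c, a \in GA m -> c \in GC n -> act a c \in GC (m + n);
  dgm_d_act : forall m a c, a \in GA m -> d (act a c) = gsign m *: act a (d c)
}.

Definition has_degree (C : lmodType R) (GC : int -> pred C) (k : int) (f : C -> C) :=
  forall n c, c \in GC n -> f c \in GC (n + k).

Definition equivariant (A : algType R) (GA : int -> pred A) (C : lmodType R)
    (act : A -> C -> C) (p : int) (f : C -> C) :=
  forall m a c, a \in GA m -> f (act a c) = gsign (m * p) *: act a (f c).

Definition projection_onto (C : lmodType R) (f : C -> C) (C' : pred C) : Prop :=
  [/\ linmap f, forall c, f c \in C' & forall c, c \in C' -> f c = c].

(* [d,H] = dH + Hd = I - P *)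
Definition homotopy_between (C : lmodType R) (d H P : C -> C) : Prop :=
  forall c, d (H c) + H (d c) = c - P c.

End GradedDefs.

(* Two projections onto the same subspace absorb each other (Pi1 Pi = Pi and
   Pi Pi1 = Pi1), so T = I - Pi1 - Pi is an involution with Pi1 T = T Pi = -Pi.
   Since d^2 = 0, the identity [d, H1] = I - Pi1 forces Pi1 to commute with d,
   hence so does T, and [d, T H1 T] = T [d, H1] T = T (I - Pi1) T = I - Pi. *)
From HB Require Import structures.
From mathcomp Require Import all_boot all_order all_algebra.
Set Implicit Arguments. Unset Strict Implicit. Unset Printing Implicit Defensive.
Import GRing.Theory.
Local Open Scope ring_scope.

Section LinearMaps.
Variables (R : fieldType) (V : lmodType R).
Implicit Types (f g : V -> V) (S : pred V).

Lemma linmap0 f : linmap f -> f 0 = 0.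
Proof.
move=> lf; have := lf 1 0 0; rewrite !scale1r addr0 => f0_double.
by apply: (@addrI _ (f 0)); rewrite addr0 -f0_double.
Qed.

Lemma linmapD f u v : linmap f -> f (u + v) = f u + f v.
Proof. by move=> lf; rewrite -{1}(scale1r u) lf scale1r. Qed.

Lemma linmapZ f k u : linmap f -> f (k *: u) = k *: f u.
Proof. by move=> lf; rewrite -[k *: u]addr0 lf linmap0 ?addr0. Qed.

Lemma linmapN f u : linmap f -> f (- u) = - f u.
Proof. by move=> lf; rewrite -scaleN1r linmapZ // scaleN1r. Qed.

Lemma linmapB f u v : linmap f -> f (u - v) = f u - f v.
Proof. by move=> lf; rewrite linmapD // linmapN. Qed.

Lemma linmap_sub f g : linmap f -> linmap g -> linmap (fun c => f c - g c).
Proof. by move=> lf lg k u v; rewrite lf lg opprD addrACA scalerBr. Qed.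

Lemma linmap_comp f g : linmap f -> linmap g -> linmap (fun c => g (f c)).
Proof. by move=> lf lg k u v; rewrite lf lg. Qed.

Lemma subspaceD S u v : subspace S -> u \in S -> v \in S -> u + v \in S.
Proof. by move=> [_ closedS] Su Sv; rewrite -(scale1r u) closedS. Qed.

Lemma subspaceZ S k u : subspace S -> u \in S -> k *: u \in S.
Proof. by move=> [S0 closedS] Su; rewrite -[k *: u]addr0 closedS. Qed.

Lemma subspaceB S u v : subspace S -> u \in S -> v \in S -> u - v \in S.
Proof. by move=> subS Su Sv; rewrite -scaleN1r subspaceD ?subspaceZ. Qed.

End LinearMaps.

Lemma gsignE (R : fieldType) (m : int) : gsign R m = (-1) ^ m.
Proof. by case: m => n //; rewrite /gsign /exprz -exprVn invrN1. Qed.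

Lemma gsignD (R : fieldType) (m n : int) :
  gsign R (m + n) = gsign R m * gsign R n.
Proof. by rewrite !gsignE exprzDr ?unitrN1. Qed.

Section GradedOperators.
Variables (R : fieldType) (A : algType R) (GA : int -> pred A).
Variables (C : lmodType R) (GC : int -> pred C) (act : A -> C -> C).
Implicit Types (f g : C -> C) (p q : int).

Lemma has_degree_id : has_degree GC 0 (fun c => c).
Proof. by move=> n c; rewrite addr0. Qed.

Lemma has_degree_sub p f g : (forall n, subspace (GC n)) ->
  has_degree GC p f -> has_degree GC p g ->
  has_degree GC p (fun c => f c - g c).
Proof. by move=> subGC degf degg n c GCc; rewrite subspaceB ?degf ?degg. Qed.

Lemma has_degree_comp p q f g : has_degree GC p f -> has_degree GC q g ->
  has_degree GC (p + q) (fun c => g (f c)).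
Proof. by move=> degf degg n c GCc; rewrite addrA degg ?degf. Qed.

Lemma equivariant_id : equivariant GA act 0 (fun c => c).
Proof. by move=> m a c _; rewrite mulr0 /gsign scale1r. Qed.

Lemma equivariant_sub p f g : (forall a, linmap (act a)) ->
  equivariant GA act p f -> equivariant GA act p g ->
  equivariant GA act p (fun c => f c - g c).
Proof.
move=> lact eqf eqg m a c GAa.
have la := lact a.
by rewrite (eqf m) // (eqg m) // -scalerBr (linmapB _ _ la).
Qed.

Lemma equivariant_comp p q f g : linmap g ->
  equivariant GA act p f -> equivariant GA act q g ->
  equivariant GA act (p + q) (fun c => g (f c)).
Proof.
move=> lg eqf eqg m a c GAa.
by rewrite (eqf m) // linmapZ // (eqg m) // scalerA -gsignD mulrDr.
Qed.

End GradedOperators.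

Section Homotopies.
Variables (R : fieldType) (V : lmodType R) (S : pred V).
Implicit Types (d H P Q : V -> V).

Lemma homotopy_between_cochain d H P : linmap d -> linmap H ->
  (forall c, d (d c) = 0) -> homotopy_between d H P ->
  forall c, d (P c) = P (d c).
Proof.
move=> ld lH dd hom c.
have d_hom := congr1 d (hom c).
rewrite (linmapD _ _ ld) dd add0r (linmapB _ _ ld) in d_hom.
by have := hom (d c); rewrite dd (linmap0 lH) addr0 d_hom => /addrI/oppr_inj.
Qed.

Lemma projection_onto_comp P Q : projection_onto P S -> projection_onto Q S ->
  forall c, P (Q c) = Q c.
Proof. by move=> [_ _ fixP] [_ inS _] c; rewrite fixP ?inS. Qed.

Definition proj_reflection P Q c := c - P c - Q c.

Variables (P1 P : V -> V).
Hypotheses (projP1 : projection_onto P1 S) (projP : projection_onto P S).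

Let lP1 : linmap P1. Proof. by case: projP1. Qed.
Let lP : linmap P. Proof. by case: projP. Qed.
Let P1P1 := projection_onto_comp projP1 projP1.
Let P1P := projection_onto_comp projP1 projP.
Let PP1 := projection_onto_comp projP projP1.
Let PP := projection_onto_comp projP projP.
Local Notation T := (proj_reflection P1 P).

Lemma proj_reflection_linmap : linmap T.
Proof. by do 2!apply: linmap_sub => //. Qed.

Lemma proj_proj_reflection c : P1 (T c) = - P c.
Proof. by rewrite !(linmapB _ _ lP1) P1P1 P1P subrr sub0r. Qed.

Lemma proj_reflection_proj c : T (P c) = - P c.
Proof. by rewrite /proj_reflection P1P PP subrr sub0r. Qed.

Lemma proj_reflectionK c : T (T c) = c.
Proof.
rewrite {1}/proj_reflection proj_proj_reflection !(linmapB _ _ lP) PP1 PP.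
rewrite /proj_reflection opprK subrK [P c - _ - _]addrAC subrr add0r.
by rewrite opprK subrK.
Qed.

Lemma homotopy_between_reflection d H1 : linmap d -> linmap H1 ->
  (forall c, d (d c) = 0) -> homotopy_between d H1 P1 ->
  (forall c, d (P c) = P (d c)) ->
  homotopy_between d (fun c => T (H1 (T c))) P.
Proof.
move=> ld lH1 dd hom dP c.
have dP1 := homotopy_between_cochain ld lH1 dd hom.
have dT c' : d (T c') = T (d c') by rewrite !(linmapB _ _ ld) dP1 dP.
have lT := proj_reflection_linmap.
rewrite dT -(dT c) -(linmapD _ _ lT) hom (linmapB _ _ lT) proj_proj_reflection.
by rewrite proj_reflectionK (linmapN _ lT) proj_reflection_proj opprK.
Qed.

End Homotopies.

Theorem lemma5p6 (R : fieldType) (A : algType R) (GA : int -> pred A)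
    (C : lmodType R) (GC : int -> pred C) (act : A -> C -> C) (d : C -> C)
    (C' : pred C) (H1 Pi1 Pi : C -> C) :
  graded_algebra GA -> dg_module GA GC act d ->
  subspace C' -> (forall c, c \in C' -> d c \in C') ->
  linmap H1 -> has_degree GC (-1) H1 -> equivariant GA act (-1) H1 ->
  projection_onto Pi1 C' -> has_degree GC 0 Pi1 -> equivariant GA act 0 Pi1 ->
  homotopy_between d H1 Pi1 ->
  projection_onto Pi C' -> has_degree GC 0 Pi -> equivariant GA act 0 Pi ->
  (forall c, d (Pi c) = Pi (d c)) ->
  let H := fun c => let x := c - Pi1 c - Pi c in
                    let y := H1 x in y - Pi1 y - Pi y in
  [/\ linmap H, has_degree GC (-1) H, equivariant GA act (-1) H &
      homotopy_between d H Pi].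
Proof.
move=> _ dgm _ _ lH1 degH1 eqH1 projPi1 degPi1 eqPi1 hom projPi degPi eqPi dPi.
move=> H.
have [subGC _ _] := dgm_grading dgm.
have lT := proj_reflection_linmap projPi1 projPi.
have degT : has_degree GC 0 (proj_reflection Pi1 Pi).
  by do 2!apply: has_degree_sub => //; apply: has_degree_id.
have eqT : equivariant GA act 0 (proj_reflection Pi1 Pi).
  have lact := dgm_act_lin dgm.
  by do 2!apply: equivariant_sub => //; apply: equivariant_id.
split.
- exact: linmap_comp (linmap_comp lT lH1) lT.
- have := has_degree_comp (has_degree_comp degT degH1) degT.
  by rewrite add0r addr0.
- have := equivariant_comp lT (equivariant_comp lH1 eqT eqH1) eqT.
  by rewrite add0r addr0.
- by have := homotopy_between_reflection projPi1 projPi (dgm_d_lin dgm) lH1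
    (dgm_dd dgm) hom dPi.
Qed.
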